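(* Fix $\omega\in(0,1)$, $\gamma\in(0,1)$, $\kappa\in(0,1)$, $\Delta\in(0,e-2)$, $G\ge0$, and an integer $\hat\tau_1\ge1$ with $\hat\tau_1^\omega>\frac{1}{1-\ln(2+\Delta)}$. Let $c\ge\frac{\ln(2+\Delta)+1/\hat\tau_1^\omega}{1-\ln(2+\Delta)-1/\hat\tau_1^\omega}$, and let $t_0\ge\hat\tau_1$ be an integer such that $t_1:=t_0+\frac{2c}{\kappa}t_0^\omega$ is an integer. Let $\gamma'=\frac{1+\gamma}{2}$, $\xi=\frac{1-\gamma}{4}$, and define $X_{t_0}=G$ and $X_{t+1}=(1-t^{-\omega})X_t+t^{-\omega}\gamma'G$ for $t\ge t_0$. Then for every $t\ge t_1$, $$X_t\le\Big(\gamma'+\frac{2}{2+\Delta}\xi\Big)G.$$ *)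

From Stdlib Require Import Reals.
Open Scope R_scope.

Definition rpow (t : nat) (a : R) : R := Rpower (INR t) a.

From Stdlib Require Import Reals Lra Lia.
Open Scope R_scope.

(* Write gamma' = (1 + gamma)/2 and Y t = X t - gamma' G.  The
   recursion becomes the pure contraction Y (t+1) = (1 - t^-omega) Y t, with
   Y t0 = (1 - gamma)/2 G = 2 xi G >= 0, so Y stays nonnegative, never
   increases, and after n steps whose rates are all >= q it has shrunk by the
   factor exp (- n q).  On [t0, t1) every rate is >= q := t1^-omega, and since
   t1 <= (1 + k) t0 for k = 2c/kappa, the total weight (t1 - t0) q is at least
   k/(1 + k) >= c/(1 + c) >= ln (2 + Delta); the last inequality is exactly
   what the lower bound on c provides.  Hence Y t <= Y t1 <= 2 xi G/(2 + Delta)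
   for t >= t1, which is the claim.
   The file proves, in order: elementary inequalities for exp and for real
   powers t^a, the contraction estimates for any sequence with
   Y (t+1) = (1 - p t) Y t, the arithmetic consequences of the choice of c,
   the weight bound for the horizon t1, and finally the theorem. *)

Lemma exp_le_mono (x y : R) : x <= y -> exp x <= exp y.
Proof.
  intros Hxy; destruct (Rle_lt_or_eq_dec _ _ Hxy) as [Hlt | ->].
  - left; exact (exp_increasing _ _ Hlt).
  - right; reflexivity.
Qed.

Lemma one_minus_le_exp (p : R) : 1 - p <= exp (- p).
Proof. pose proof (exp_ineq1_le (- p)); lra. Qed.

Lemma exp_neg_le_inv (b x : R) : 0 < b -> ln b <= x -> exp (- x) <= / b.
Proof.
  intros Hb Hx; rewrite <- (exp_ln b), <- exp_Ropp by exact Hb.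
  apply exp_le_mono; lra.
Qed.

Lemma INR_ge_1 (n : nat) : (1 <= n)%nat -> 1 <= INR n.
Proof. intros Hn; apply le_INR in Hn; simpl in Hn; lra. Qed.

Lemma rpow_pos (t : nat) (a : R) : 0 < rpow t a.
Proof. apply exp_pos. Qed.

Lemma rpow_le_self (t : nat) (a : R) :
  (1 <= t)%nat -> a <= 1 -> rpow t a <= INR t.
Proof.
  intros Ht Ha; unfold rpow.
  rewrite <- (Rpower_1 (INR t)) at 2 by (pose proof (INR_ge_1 _ Ht); lra).
  apply Rle_Rpower; [apply INR_ge_1 |]; assumption.
Qed.

Lemma rpow_le_1 (t : nat) (a : R) : (1 <= t)%nat -> a <= 0 -> rpow t a <= 1.
Proof.
  intros Ht Ha; unfold rpow.
  rewrite <- (Rpower_O (INR t)) by (pose proof (INR_ge_1 _ Ht); lra).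
  apply Rle_Rpower; [apply INR_ge_1 |]; assumption.
Qed.

Lemma rpow_neg_antitone (s t : nat) (a : R) :
  (1 <= s)%nat -> (s <= t)%nat -> 0 <= a -> rpow t (- a) <= rpow s (- a).
Proof.
  intros Hs Hst Ha; unfold rpow; rewrite !Rpower_Ropp.
  apply Rinv_le_contravar; [apply exp_pos |].
  apply Rle_Rpower_l; [exact Ha |].
  split; [pose proof (INR_ge_1 _ Hs); lra | apply le_INR; exact Hst].
Qed.

Lemma rpow_dilation (s t : nat) (a k : R) :
  (1 <= s)%nat -> (1 <= t)%nat -> 0 <= a <= 1 -> 0 <= k ->
  INR t <= (1 + k) * INR s -> rpow t a <= (1 + k) * rpow s a.
Proof.
  intros Hs Ht Ha Hk Hts; unfold rpow.
  pose proof (INR_ge_1 _ Hs); pose proof (INR_ge_1 _ Ht).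
  assert (Hpow_t : Rpower (INR t) a <= Rpower (1 + k) a * Rpower (INR s) a).
  { rewrite Rpower_mult_distr by lra; apply Rle_Rpower_l; lra. }
  assert (Hpow_k : Rpower (1 + k) a <= 1 + k).
  { rewrite <- (Rpower_1 (1 + k)) at 2 by lra; apply Rle_Rpower; lra. }
  pose proof (exp_pos (a * ln (INR s))); unfold Rpower in *; nra.
Qed.

Section Contraction.

Variables (Y p : nat -> R) (s0 : nat).
Hypothesis Hrec : forall s, (s0 <= s)%nat -> Y (S s) = (1 - p s) * Y s.
Hypothesis Hrate : forall s, (s0 <= s)%nat -> 0 <= p s <= 1.
Hypothesis Hstart : 0 <= Y s0.

Lemma contraction_nonneg (m : nat) : 0 <= Y (s0 + m).
Proof.
  induction m as [| m IH]; [rewrite Nat.add_0_r; exact Hstart |].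
  rewrite Nat.add_succ_r, Hrec by lia.
  pose proof (Hrate (s0 + m) ltac:(lia)); nra.
Qed.

Lemma contraction_noninc (m j : nat) : Y (s0 + m + j) <= Y (s0 + m).
Proof.
  induction j as [| j IH]; [rewrite Nat.add_0_r; lra |].
  rewrite Nat.add_succ_r, Hrec by lia.
  pose proof (Hrate (s0 + m + j) ltac:(lia)).
  pose proof (contraction_nonneg (m + j)) as Hnn; rewrite Nat.add_assoc in Hnn.
  nra.
Qed.

Lemma contraction_decay (q : R) (m : nat) :
  (forall s, (s0 <= s < s0 + m)%nat -> q <= p s) ->
  Y (s0 + m) <= Y s0 * exp (- (INR m * q)).
Proof.
  induction m as [| m IH]; intros Hq.
  - rewrite Nat.add_0_r; simpl; rewrite Rmult_0_l, Ropp_0, exp_0; lra.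
  - assert (Hstep : 1 - p (s0 + m)%nat <= exp (- q)).
    { apply Rle_trans with (1 := one_minus_le_exp _).
      apply exp_le_mono; pose proof (Hq (s0 + m)%nat ltac:(lia)); lra. }
    rewrite Nat.add_succ_r, Hrec by lia.
    rewrite S_INR, Rmult_plus_distr_r, Rmult_1_l, Ropp_plus_distr, exp_plus.
    pose proof (contraction_nonneg m).
    pose proof (IH ltac:(intros s Hs; apply Hq; lia)).
    pose proof (exp_pos (- q)); pose proof (Hrate (s0 + m) ltac:(lia)).
    apply Rle_trans with (exp (- q) * Y (s0 + m)%nat); [apply Rmult_le_compat_r; lra |].
    nra.
Qed.

Lemma contraction_after_horizon (q b : R) (n : nat) :
  0 < b -> ln b <= INR n * q ->
  (forall s, (s0 <= s < s0 + n)%nat -> q <= p s) ->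
  forall t, (s0 + n <= t)%nat -> Y t <= Y s0 * / b.
Proof.
  intros Hb Hweight Hq t Ht.
  replace t with (s0 + n + (t - (s0 + n)))%nat by lia.
  apply Rle_trans with (1 := contraction_noninc n (t - (s0 + n))).
  apply Rle_trans with (1 := contraction_decay q n Hq).
  apply Rmult_le_compat_l; [exact Hstart |].
  apply exp_neg_le_inv; assumption.
Qed.

End Contraction.

Lemma threshold_ratio (L e c : R) :
  0 < L -> 0 < e -> L + e < 1 -> c >= (L + e) / (1 - L - e) ->
  0 < c /\ L <= c / (1 + c).
Proof.
  intros HL He HLe Hc.
  assert (Hcd : c * (1 - L - e) >= L + e).
  { apply Rge_trans with ((L + e) / (1 - L - e) * (1 - L - e)).
    - apply Rle_ge, Rmult_le_compat_r; lra.
    - right; field; lra. }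
  assert (Hc0 : 0 < c) by nra.
  split; [exact Hc0 |].
  apply (Rmult_le_reg_r (1 + c)); [lra |].
  replace (c / (1 + c) * (1 + c)) with c by (field; lra); nra.
Qed.

Lemma admissible_c (Delta T c : R) :
  0 < Delta < exp 1 - 2 -> 0 < T -> T > 1 / (1 - ln (2 + Delta)) ->
  c >= (ln (2 + Delta) + 1 / T) / (1 - ln (2 + Delta) - 1 / T) ->
  0 < c /\ ln (2 + Delta) <= c / (1 + c).
Proof.
  intros HDelta HT HTL Hc; set (L := ln (2 + Delta)) in *.
  (* 0 < L < 1 because 1 < 2 + Delta < e. *)
  assert (HL : 0 < L < 1).
  { unfold L; split.
    - rewrite <- ln_1; apply ln_increasing; lra.
    - rewrite <- (ln_exp 1); apply ln_increasing; lra. }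
  (* T > 1/(1 - L) means exactly L + 1/T < 1. *)
  assert (Hsmall : L + 1 / T < 1).
  { assert (Hmul : (1 - L) * (1 / (1 - L)) < (1 - L) * T)
      by (apply Rmult_lt_compat_l; lra).
    replace ((1 - L) * (1 / (1 - L))) with 1 in Hmul by (field; lra).
    apply (Rmult_lt_reg_r T); [exact HT |].
    replace ((L + 1 / T) * T) with (L * T + 1) by (field; lra); nra. }
  apply (threshold_ratio L (1 / T) c); [lra | apply Rdiv_lt_0_compat; lra | exact Hsmall | exact Hc].
Qed.

Lemma ratio_mono (c k : R) : 0 <= c -> c <= k -> c / (1 + c) <= k / (1 + k).
Proof.
  intros Hc Hck.
  apply (Rmult_le_reg_r ((1 + c) * (1 + k))); [nra |].
  replace (c / (1 + c) * ((1 + c) * (1 + k))) with (c * (1 + k)) by (field; lra).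
  replace (k / (1 + k) * ((1 + c) * (1 + k))) with (k * (1 + c)) by (field; lra).
  nra.
Qed.

Lemma horizon_after_start (t0 t1 : nat) (a k : R) :
  0 <= k -> INR t1 = INR t0 + k * rpow t0 a -> (t0 <= t1)%nat.
Proof.
  intros Hk Ht1; apply INR_le; rewrite Ht1.
  pose proof (rpow_pos t0 a); nra.
Qed.

Lemma horizon_weight (t0 t1 : nat) (a k : R) :
  (1 <= t0)%nat -> 0 <= a <= 1 -> 0 <= k ->
  INR t1 = INR t0 + k * rpow t0 a ->
  k / (1 + k) <= (INR t1 - INR t0) * rpow t1 (- a).
Proof.
  intros Ht0 Ha Hk Ht1.
  pose proof (rpow_pos t0 a) as Hpos0; pose proof (rpow_pos t1 a) as Hpos1.
  assert (Hgrowth : rpow t1 a <= (1 + k) * rpow t0 a).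
  { apply rpow_dilation; [exact Ht0 | | exact Ha | exact Hk |].
    { pose proof (horizon_after_start t0 t1 a k Hk Ht1); lia. }
    rewrite Ht1; pose proof (rpow_le_self t0 a Ht0 (proj2 Ha)); nra. }
  assert (Hinv : rpow t1 (- a) = / rpow t1 a) by apply Rpower_Ropp.
  rewrite Ht1, Hinv.
  replace (INR t0 + k * rpow t0 a - INR t0) with (k * rpow t0 a) by ring.
  apply (Rmult_le_reg_r ((1 + k) * rpow t1 a)); [nra |].
  replace (k / (1 + k) * ((1 + k) * rpow t1 a)) with (k * rpow t1 a) by (field; lra).
  replace (k * rpow t0 a * / rpow t1 a * ((1 + k) * rpow t1 a))
    with (k * ((1 + k) * rpow t0 a)) by (field; lra).
  apply Rmult_le_compat_l; lra.
Qed.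

Theorem lemma5
  (omega gamma kappa Delta G c : R) (tau1 t0 t1 : nat) (X : nat -> R)
  (Homega : 0 < omega < 1) (Hgamma : 0 < gamma < 1) (Hkappa : 0 < kappa < 1)
  (HDelta : 0 < Delta < exp 1 - 2) (HG : 0 <= G)
  (Htau1 : (1 <= tau1)%nat)
  (Htau1w : rpow tau1 omega > 1 / (1 - ln (2 + Delta)))
  (Hc : c >= (ln (2 + Delta) + 1 / rpow tau1 omega)
             / (1 - ln (2 + Delta) - 1 / rpow tau1 omega))
  (Ht0 : (tau1 <= t0)%nat)
  (Ht1 : INR t1 = INR t0 + (2 * c / kappa) * rpow t0 omega)
  (HX0 : X t0 = G)
  (HXrec : forall t : nat, (t0 <= t)%nat ->
      X (S t) = (1 - rpow t (- omega)) * X t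
                + rpow t (- omega) * ((1 + gamma) / 2) * G) :
  forall t : nat, (t1 <= t)%nat ->
    X t <= ((1 + gamma) / 2 + 2 / (2 + Delta) * ((1 - gamma) / 4)) * G.
Proof.
  intros t Ht.
  set (L := ln (2 + Delta)) in *; set (k := 2 * c / kappa) in *.
  set (g := (1 + gamma) / 2) in *.
  destruct (admissible_c Delta (rpow tau1 omega) c HDelta (rpow_pos _ _) Htau1w Hc)
    as [Hc0 HLc].
  assert (Hck : c <= k).
  { unfold k; apply (Rmult_le_reg_r kappa); [lra |].
    replace (2 * c / kappa * kappa) with (2 * c) by (field; lra); nra. }
  set (q := rpow t1 (- omega)); set (n := (t1 - t0)%nat).
  set (Y := fun s => X s - g * G); set (p := fun s : nat => rpow s (- omega)).
  assert (Ht01 : (t0 <= t1)%nat) by exact (horizon_after_start t0 t1 omega k ltac:(lra) Ht1).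
  assert (HYrec : forall s, (t0 <= s)%nat -> Y (S s) = (1 - p s) * Y s).
  { intros s Hs; unfold Y, p; rewrite HXrec by exact Hs; ring. }
  assert (Hrate : forall s, (t0 <= s)%nat -> 0 <= p s <= 1).
  { intros s Hs; split; [apply Rlt_le, rpow_pos | apply rpow_le_1; [lia | lra]]. }
  assert (HY0 : Y t0 = (1 - gamma) / 2 * G) by (unfold Y, g; rewrite HX0; field).
  assert (HYpos : 0 <= Y t0) by (rewrite HY0; nra).
  assert (Hweight : L <= INR n * q).
  { unfold n, q; rewrite minus_INR by exact Ht01.
    apply Rle_trans with (k / (1 + k)); [apply Rle_trans with (c / (1 + c)) |].
    - exact HLc.
    - apply ratio_mono; lra.
    - apply horizon_weight; [lia | lra | lra | exact Ht1]. }
  assert (Hlate : Y t <= Y t0 * / (2 + Delta)).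
  { apply (contraction_after_horizon Y p t0 HYrec Hrate HYpos q (2 + Delta) n);
      [lra | exact Hweight | | lia].
    intros s Hs; apply rpow_neg_antitone; [lia | lia | lra]. }
  assert (Hfinal : X t - g * G <= (1 - gamma) / 2 * G * / (2 + Delta))
    by (fold (Y t); rewrite <- HY0; lra).
  replace ((g + 2 / (2 + Delta) * ((1 - gamma) / 4)) * G)
    with (g * G + (1 - gamma) / 2 * G * / (2 + Delta)) by (unfold g; field; lra).
  lra.
Qed.
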